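(* Let $\mathcal{A}$ and $\mathcal{B}$ be $C^{*}$-algebras, let $\Xi$ be a Hilbert $\mathcal{A}$-module and $\nabla$ a Hilbert $\mathcal{B}$-module. Let $p>3$, let $\theta$ be a nonnegative real number and let $f:\Xi\rightarrow\nabla$ be a mapping such that $$\| f(\mu x+y)-\mu f(x)-f(y)\| \leq \theta\left(\|x\|^{p}+\|y\|^{p}\right),$$ $$\| f(\langle x,y\rangle z)-\langle f(x),f(y)\rangle f(z)\| \leq \theta\left(\|x\|^{p}+\|y\|^{p}+\|z\|^{p}\right),$$ $$\| f(\langle x,y\rangle^{*} z)-\langle f(x),f(y)\rangle^{*} f(z)\| \leq \theta\left(\|x\|^{p}+\|y\|^{p}+\|z\|^{p}\right)$$ for all $x,y,z\in\Xi$ and all $\mu\in\mathbb{T}$. Then there exists a unique Hilbert $C^{*}$-module $\ast$-homomorphism $H:\Xi\rightarrow\nabla$ such that $$\|f(x)-H(x)\|\leq \frac{2\theta}{2^{p}-2^{3}}\|x\|^{p}$$ for all $x\in\Xi$.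
   Context: $\mathbb{T}=\{z\in\mathbb{C}:|z|=1\}$. For a $C^{*}$-algebra $\mathcal{A}$, a (left) Hilbert $\mathcal{A}$-module is a complex linear space $\Xi$ with a compatible left $\mathcal{A}$-module action ($\lambda(ax)=(\lambda a)x=a(\lambda x)$) and a map $\langle\cdot,\cdot\rangle:\Xi\times\Xi\to\mathcal{A}$ that is linear in the first variable, satisfies $\langle ax,y\rangle=a\langle x,y\rangle$, $\langle x,y\rangle^{*}=\langle y,x\rangle$, $\langle x,x\rangle\geq 0$ with equality iff $x=0$, and such that $\Xi$ is complete in the norm $\|x\|=\|\langle x,x\rangle\|^{1/2}$. For a Hilbert $\mathcal{A}$-module $\Xi$ and a Hilbert $\mathcal{B}$-module $\nabla$, a Hilbert $C^{*}$-module homomorphism is a $\mathbb{C}$-linear map $H:\Xi\to\nabla$ with $H(\langle x,y\rangle z)=\langle H(x),H(y)\rangle H(z)$ for all $x,y,z\in\Xi$; it is a Hilbert $C^{*}$-module $\ast$-homomorphism if moreover $H(\langle x,y\rangle^{*} z)=\langle H(x),H(y)\rangle^{*} H(z)$ for all $x,y,z\in\Xi$. *)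

From HB Require Import structures.
From mathcomp Require Import all_boot all_order all_algebra.
From mathcomp Require Import complex.
From mathcomp Require Import reals exp.
Set Implicit Arguments.
Unset Strict Implicit.
Unset Printing Implicit Defensive.
Import Order.TTheory GRing.Theory Num.Theory.
Local Open Scope ring_scope.

Section HilbertModules.
Variable R : realType.
Local Notation C := R[i].

Definition cabs (l : C) : R := Num.sqrt (complex.Re l ^+ 2 + complex.Im l ^+ 2).

Definition cconj (l : C) : C := conjc l.

Definition complete_for (T : zmodType) (n : T -> R) : Prop :=
  forall u : nat -> T,
    (forall e : R, 0 < e -> exists N : nat, forall m k : nat,
        (N <= m)%N -> (N <= k)%N -> n (u m - u k) < e) ->
    exists l : T, forall e : R, 0 < e -> exists N : nat, forall m : nat,
        (N <= m)%N -> n (u m - l) < e.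

Section CStar.
Variables (A : lmodType C) (mul : A -> A -> A) (star : A -> A) (nrm : A -> R).

Record is_cstar_algebra : Prop := {
  cs_mulDl : forall (l : C) (x y z : A), mul (l *: x + y) z = l *: mul x z + mul y z;
  cs_mulDr : forall (l : C) (x y z : A), mul x (l *: y + z) = l *: mul x y + mul x z;
  cs_mulA : forall x y z : A, mul x (mul y z) = mul (mul x y) z;
  cs_starD : forall x y : A, star (x + y) = star x + star y;
  cs_starZ : forall (l : C) (x : A), star (l *: x) = cconj l *: star x;
  cs_starK : forall x : A, star (star x) = x;
  cs_starM : forall x y : A, star (mul x y) = mul (star y) (star x);
  cs_norm_eq0 : forall x : A, nrm x = 0 <-> x = 0;
  cs_normD : forall x y : A, nrm (x + y) <= nrm x + nrm y;
  cs_normZ : forall (l : C) (x : A), nrm (l *: x) = cabs l * nrm x;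
  cs_normM : forall x y : A, nrm (mul x y) <= nrm x * nrm y;
  cs_cstar : forall x : A, nrm (mul (star x) x) = nrm x ^+ 2;
  cs_complete : complete_for nrm
}.

(* Positivity in a (possibly non-unital) C*-algebra: a is self-adjoint and
   its spectrum (computed in the unitization A + C) lies in [0, +oo).
   For l <> 0, l is outside the spectrum of a iff (l 1 - a) is invertible
   in the unitization, i.e. there is b with
   (l 1 - a)(l^-1 1 + b) = 1 = (l^-1 1 + b)(l 1 - a), which unfolds to the
   two equations below.  In the complex field R[i], [0 <= l] means that l is
   a nonnegative real number (in particular 0 is always allowed in the
   spectrum). *)
Definition cs_pos (a : A) : Prop :=
  star a = a /\
  forall l : C, ~ (0 <= l) ->
    exists b : A, l *: b - mul a b - l^-1 *: a = 0 /\
                  l *: b - mul b a - l^-1 *: a = 0.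

Section Module.
Variables (X : lmodType C) (act : A -> X -> X) (ip : X -> X -> A).

Definition hm_norm (x : X) : R := Num.sqrt (nrm (ip x x)).

(* The last three fields are standard
   consequences of the others (triangle inequality for the module norm,
   Cauchy-Schwarz inequality, and ||a x|| <= ||a|| ||x||); they are recorded
   explicitly since the paper uses that ||.|| is a norm; they do not change
   the class of structures described. *)
Record is_hilbert_module : Prop := {
  hm_actDl : forall (a b : A) (x : X), act (a + b) x = act a x + act b x;
  hm_actDr : forall (a : A) (x y : X), act a (x + y) = act a x + act a y;
  hm_actM : forall (a b : A) (x : X), act (mul a b) x = act a (act b x);
  hm_actZl : forall (l : C) (a : A) (x : X), act (l *: a) x = l *: act a x;
  hm_actZr : forall (l : C) (a : A) (x : X), act a (l *: x) = l *: act a x;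
  hm_ip_linl : forall (l : C) (x y z : X), ip (l *: x + y) z = l *: ip x z + ip y z;
  hm_ip_act : forall (a : A) (x y : X), ip (act a x) y = mul a (ip x y);
  hm_ip_star : forall x y : X, star (ip x y) = ip y x;
  hm_ip_pos : forall x : X, cs_pos (ip x x);
  hm_ip_eq0 : forall x : X, ip x x = 0 <-> x = 0;
  hm_complete : complete_for hm_norm;
  hm_normD : forall x y : X, hm_norm (x + y) <= hm_norm x + hm_norm y;
  hm_cauchy_schwarz : forall x y : X, nrm (ip x y) <= hm_norm x * hm_norm y;
  hm_norm_act : forall (a : A) (x : X), hm_norm (act a x) <= nrm a * hm_norm x
}.

End Module.
End CStar.

Section Homs.
Variables (A : lmodType C) (starA : A -> A)
          (B : lmodType C) (starB : B -> B)
          (X : lmodType C) (actX : A -> X -> X) (ipX : X -> X -> A)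
          (Y : lmodType C) (actY : B -> Y -> Y) (ipY : Y -> Y -> B).

Definition hilbert_hom (H : X -> Y) : Prop :=
  (forall (l : C) (x y : X), H (l *: x + y) = l *: H x + H y) /\
  (forall x y z : X, H (actX (ipX x y) z) = actY (ipY (H x) (H y)) (H z)).

Definition hilbert_star_hom (H : X -> Y) : Prop :=
  hilbert_hom H /\
  (forall x y z : X,
      H (actX (starA (ipX x y)) z) = actY (starB (ipY (H x) (H y))) (H z)).
End Homs.

End HilbertModules.

(* Hyers' direct method.  The sequence [2^n f (2^-n x)] is Cauchy: consecutive
   terms differ by at most [2 theta ||x||^p / 2^p * (2 / 2^p)^n].  Its limit [H]
   in the complete module satisfies [||f x - H x|| <= 2 theta ||x||^p / (2^p - 2)].
   Rescaling the first inequality makes [H] additive and homogeneous for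
   unimodular scalars, hence complex linear, since every complex number is a
   natural multiple of a sum of two unimodular ones.  The map
   [(x, y, z) |-> <x, y> z] is cubic, so comparing the [3n]-th term with the
   product of the [n]-th terms leaves a defect of order [(2^3 / 2^p)^n], which
   vanishes because [p > 3].  The same rescaling shows that two linear maps
   within [C ||x||^p] of [f] coincide. *)

From HB Require Import structures.
From mathcomp Require Import all_boot all_order all_algebra.
From mathcomp Require Import complex.
From mathcomp Require Import reals exp.
From mathcomp Require Import all_classical topology normedtype sequences.
From mathcomp Require Import ring lra.
Import Order.TTheory GRing.Theory Num.Theory numFieldNormedType.Exports.
Local Open Scope ring_scope.

Set Implicit Arguments.
Unset Strict Implicit.
Unset Printing Implicit Defensive.

Lemma powR_exprVn (R : realType) (a s : R) n : 0 <= a -> (a ^- n) `^ s = (a `^ s) ^- n.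
Proof. by move=> a0; rewrite -powR_invn // powRAC powR_invn ?powR_ge0. Qed.

Lemma geometric_eventually_lt (R : realType) (a r e : R) : 0 <= r < 1 -> 0 < e ->
  exists N, forall n, (N <= n)%N -> a * r ^+ n < e.
Proof.
move=> /andP[r0 r1] e0.
have a1_gt0 : 0 < `|a| + 1 by rewrite ltr_pwDr ?normr_ge0.
have : (r ^+ n @[n --> \oo] --> (0 : R))%classic by apply: cvg_expr; rewrite ger0_norm.
move=> /cvgr0Pnorm_lt /(_ _ (divr_gt0 e0 a1_gt0)) [N _ hN].
exists N => n /hN /=; rewrite ger0_norm ?exprn_ge0 // => rn_lt.
apply: le_lt_trans (ler_norm _) _; rewrite normrM (ger0_norm (exprn_ge0 _ r0)).
rewrite ltr_pdivlMr // in rn_lt.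
apply: le_lt_trans rn_lt; rewrite mulrC.
by apply: ler_wpM2l; rewrite ?exprn_ge0 ?lerDl.
Qed.

Section ComplexModulus.
Variable R : realType.
Implicit Types (l m z : R[i]) (r : R).
Local Open Scope complex_scope.

Lemma cabsE l : (cabs l)%:C = `|l|.
Proof. by rewrite normc_def. Qed.

Lemma cabs_ge0 l : 0 <= cabs l.
Proof. exact: sqrtr_ge0. Qed.

Lemma cabsR r : cabs r%:C = `|r|.
Proof. by rewrite /cabs /= expr0n addr0 sqrtr_sqr. Qed.

Lemma cabsM l m : cabs (l * m) = cabs l * cabs m.
Proof. by apply: (@complexI R); rewrite rmorphM /= !cabsE normrM. Qed.

Lemma cabsV l : cabs l^-1 = (cabs l)^-1.
Proof. by apply: (@complexI R); rewrite fmorphV /= !cabsE normfV. Qed.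

Lemma cabsX l n : cabs (l ^+ n) = cabs l ^+ n.
Proof. by apply: (@complexI R); rewrite rmorphXn /= !cabsE normrX. Qed.

Lemma cabs_nat n : cabs (n%:R : R[i]) = n%:R.
Proof. by apply: (@complexI R); rewrite cabsE normr_nat rmorph_nat. Qed.

Lemma cabsN l : cabs (- l) = cabs l.
Proof. by apply: (@complexI R); rewrite !cabsE normrN. Qed.

Lemma cabs1 : cabs (1 : R[i]) = 1.
Proof. exact: cabs_nat 1. Qed.

Lemma cabsJ l : cabs l^* = cabs l.
Proof. by case: l => a b; rewrite /cabs /= sqrrN. Qed.

Lemma cabs_eq0 l : (cabs l == 0) = (l == 0).
Proof. by rewrite -(inj_eq (@complexI R)) rmorph0 cabsE normr_eq0. Qed.

Lemma cabs0 : cabs (0 : R[i]) = 0.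
Proof. by apply/eqP; rewrite cabs_eq0. Qed.

Lemma dyadic_cabs n : cabs ((2 : R[i]) ^+ n) = 2 ^+ n /\ cabs ((2 : R[i]) ^- n) = 2 ^- n.
Proof. by rewrite cabsV cabsX cabs_nat. Qed.

Lemma dyadic_conj n : ((2 : R[i]) ^+ n)^* = 2 ^+ n /\ ((2 : R[i]) ^- n)^* = 2 ^- n.
Proof. by split; rewrite ?conjc_inv -natrX conjc_nat. Qed.

Lemma unimodular_sum2 z : cabs z <= 2 ->
  exists mu1 mu2, [/\ cabs mu1 = 1, cabs mu2 = 1 & z = mu1 + mu2].
Proof.
have [->|z0] := eqVneq z 0; first by exists 1, (-1); rewrite cabsN cabs1 subrr.
move=> r_le2; set r := cabs z in r_le2 *.
have r_gt0 : 0 < r by rewrite lt_def cabs_eq0 z0 cabs_ge0.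
set w := Num.sqrt (1 - r ^+ 2 / 4).
have w2 : w ^+ 2 = 1 - r ^+ 2 / 4.
  by rewrite sqr_sqrtr // subr_ge0 ler_pdivrMr // mul1r; nra.
(* [z / |z|] times a unimodular number whose real part is [|z| / 2] *)
have unimodular s : s ^+ 2 = w ^+ 2 -> cabs (z / r%:C * (r / 2 +i* s)) = 1.
  move=> s2; rewrite !cabsM cabsV cabsR -/r ger0_norm ?ltW // mulfV ?gt_eqF // mul1r.
  rewrite /cabs /= s2 w2.
  suff -> : (r / 2) ^+ 2 + (1 - r ^+ 2 / 4) = 1 by exact: sqrtr1.
  by field.
exists (z / r%:C * (r / 2 +i* w)), (z / r%:C * (r / 2 +i* - w)).
split; [exact: unimodular | by apply: unimodular; rewrite sqrrN |].
rewrite -mulrDr -[_ + _]/((r / 2 + r / 2) +i* (w - w)) subrr -splitr.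
by rewrite -complexr0 divfK // (inj_eq (@complexI R)) gt_eqF.
Qed.

Lemma unimodular_natmul_sum l : exists M mu1 mu2,
  [/\ cabs mu1 = 1, cabs mu2 = 1 & l = (mu1 + mu2) *+ M].
Proof.
have l_lt := archi_boundP (cabs_ge0 l); set M := Num.bound _ in l_lt.
have M_gt0 : 0 < M%:R :> R by apply: le_lt_trans l_lt; exact: cabs_ge0.
have M_neq0 : M%:R != 0 :> R[i] by rewrite pnatr_eq0 -(pnatr_eq0 R) gt_eqF.
have [|mu1 [mu2 [h1 h2 e]]] := @unimodular_sum2 (l / M%:R).
  rewrite cabsM cabsV cabs_nat ler_pdivrMr // (le_trans (ltW l_lt)) //.
  by rewrite ler_peMl ?ler0n ?ler1n.
by exists M, mu1, mu2; rewrite -e -(mulr_natr (l / _)) divfK.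
Qed.

Lemma unimodular_additive_linear (V W : lmodType R[i]) (F : V -> W) :
  (forall mu x y, cabs mu = 1 -> F (mu *: x + y) = mu *: F x + F y) ->
  forall l x y, F (l *: x + y) = l *: F x + F y.
Proof.
move=> hF.
have FD x y : F (x + y) = F x + F y by rewrite -[x in LHS]scale1r hF ?cabs1 ?scale1r.
have F0 : F 0 = 0 by apply: (addrI (F 0)); rewrite -FD !addr0.
have FZ mu x : cabs mu = 1 -> F (mu *: x) = mu *: F x.
  by move=> /(hF mu x 0); rewrite !addr0 F0 addr0.
have FMn x M : F (x *+ M) = F x *+ M.
  by elim: M => [|M IH]; rewrite ?mulr0n ?F0 // !mulrS FD IH.
move=> l x y; rewrite FD; congr (_ + _).
have [M [mu1 [mu2 [h1 h2 ->]]]] := unimodular_natmul_sum l.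
by rewrite -!scalerMnl FMn !scalerDl FD !FZ.
Qed.

Lemma lincomb_scale (V W : lmodType R[i]) (F : V -> W) :
  (forall l x y, F (l *: x + y) = l *: F x + F y) -> forall l x, F (l *: x) = l *: F x.
Proof.
move=> hF l x.
have F0 : F 0 = 0 by have := hF (-1) 0 0; rewrite scaler0 add0r scaleN1r addNr.
by rewrite -[l *: x]addr0 hF F0 addr0.
Qed.

End ComplexModulus.

Section GeometricCauchy.
Variables (R : realType) (T : zmodType) (nrm : T -> R).
Hypotheses (nrm0 : nrm 0 = 0) (nrmN : forall x, nrm (- x) = nrm x)
  (nrmD : forall x y, nrm (x + y) <= nrm x + nrm y)
  (nrm_complete : complete_for nrm).

Lemma nrm_distD x y z : nrm (x - z) <= nrm (x - y) + nrm (y - z).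
Proof. by rewrite -[x - z](subrKA y) nrmD. Qed.

Lemma nrm_distC x y : nrm (x - y) = nrm (y - x).
Proof. by rewrite -nrmN opprB. Qed.

Variables (u : nat -> T) (a q : R).
Hypotheses (a_ge0 : 0 <= a) (q_ge0 : 0 <= q) (q_lt1 : q < 1)
  (u_step : forall k, nrm (u k.+1 - u k) <= a * q ^+ k).

Let b := a / (1 - q).

Lemma geometric_dist k m : (k <= m)%N -> nrm (u m - u k) <= b * q ^+ k.
Proof.
have q1 : 0 < 1 - q by rewrite subr_gt0.
have b_ge0 : 0 <= b by rewrite /b divr_ge0 // ltW.
suff tele : forall d, nrm (u (k + d) - u k) <= b * q ^+ k * (1 - q ^+ d).
  move/subnKC <-; apply: le_trans (tele _) _.
  by apply: ler_piMr; [exact: mulr_ge0 (exprn_ge0 _ q_ge0) | rewrite gerBl exprn_ge0].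
elim=> [|d IH]; first by rewrite addn0 subrr nrm0 expr0 subrr mulr0.
apply: le_trans (nrm_distD _ (u (k + d)) _) _; rewrite addnS.
have -> : b * q ^+ k * (1 - q ^+ d.+1) = a * q ^+ (k + d) + b * q ^+ k * (1 - q ^+ d).
  by rewrite /b exprD exprSr; field; rewrite gt_eqF.
exact: lerD (u_step _) IH.
Qed.

Lemma geometric_cauchy_cvg : exists l, forall k, nrm (u k - l) <= b * q ^+ k.
Proof.
have q01 : 0 <= q < 1 by rewrite q_ge0 q_lt1.
have [l u_cvg] : exists l, forall e, 0 < e ->
    exists N, forall m, (N <= m)%N -> nrm (u m - l) < e.
  apply: nrm_complete => e /(geometric_eventually_lt b q01) [N bN].
  exists N => m k Nm Nk; have [km|mk] := leqP k m.
    exact: le_lt_trans (geometric_dist km) (bN _ Nk).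
  by rewrite nrm_distC; apply: le_lt_trans (geometric_dist (ltnW mk)) (bN _ Nm).
exists l => k; apply/ler_addgt0Pr => e /u_cvg [N hN].
apply: le_trans (nrm_distD _ (u (maxn N k)) _) _.
by rewrite nrm_distC lerD ?geometric_dist ?leq_maxr ?ltW ?hN ?leq_maxl.
Qed.

End GeometricCauchy.

Section HilbertModule.
Variables (R : realType) (A : lmodType R[i]) (mul : A -> A -> A) (star : A -> A)
  (nrm : A -> R) (X : lmodType R[i]) (act : A -> X -> X) (ip : X -> X -> A).
Hypotheses (HA : is_cstar_algebra mul star nrm)
  (HX : is_hilbert_module mul star nrm act ip).
Local Notation N := (hm_norm nrm ip).

Lemma cs_norm0 : nrm 0 = 0.
Proof. exact/(cs_norm_eq0 HA). Qed.

Lemma cs_normN a : nrm (- a) = nrm a.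
Proof. by rewrite -scaleN1r (cs_normZ HA) cabsN cabs1 mul1r. Qed.

Lemma cs_norm_ge0 a : 0 <= nrm a.
Proof.
have := cs_normD HA a (- a); rewrite subrr cs_norm0 cs_normN.
by rewrite -mulr2n -mulr_natl pmulr_rge0.
Qed.

Lemma hm_ipDl x y z : ip (x + y) z = ip x z + ip y z.
Proof. by have := hm_ip_linl HX 1 x y z; rewrite !scale1r. Qed.

Lemma hm_ipZl l x z : ip (l *: x) z = l *: ip x z.
Proof.
have ip0 : ip 0 z = 0 by apply: (addrI (ip 0 z)); rewrite -hm_ipDl !addr0.
by have := hm_ip_linl HX l x 0 z; rewrite !addr0 ip0 addr0.
Qed.

Lemma hm_ipBl x y z : ip (x - y) z = ip x z - ip y z.
Proof. by rewrite hm_ipDl -scaleN1r hm_ipZl scaleN1r. Qed.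

Lemma hm_ipDr x y z : ip x (y + z) = ip x y + ip x z.
Proof. by rewrite -(hm_ip_star HX) hm_ipDl (cs_starD HA) !(hm_ip_star HX). Qed.

Lemma hm_ipZr l x y : ip x (l *: y) = l^*%C *: ip x y.
Proof. by rewrite -(hm_ip_star HX) hm_ipZl (cs_starZ HA) (hm_ip_star HX). Qed.

Lemma hm_ipBr x y z : ip x (y - z) = ip x y - ip x z.
Proof. by rewrite hm_ipDr -scaleN1r hm_ipZr rmorphN1 scaleN1r. Qed.

Lemma hm_actBl a b x : act (a - b) x = act a x - act b x.
Proof. by apply: (addIr (act b x)); rewrite -(hm_actDl HX) !subrK. Qed.

Lemma hm_actBr a x y : act a (x - y) = act a x - act a y.
Proof. by apply: (addIr (act a y)); rewrite -(hm_actDr HX) !subrK. Qed.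

Lemma hm_norm_ge0 x : 0 <= N x.
Proof. exact: sqrtr_ge0. Qed.

Lemma hm_normZ l x : N (l *: x) = cabs l * N x.
Proof.
rewrite /hm_norm hm_ipZl hm_ipZr scalerA (cs_normZ HA) cabsM cabsJ -expr2.
by rewrite sqrtrM ?sqr_ge0 // sqrtr_sqr ger0_norm ?sqrtr_ge0.
Qed.

Lemma hm_normN x : N (- x) = N x.
Proof. by rewrite -scaleN1r hm_normZ cabsN cabs1 mul1r. Qed.

Lemma hm_norm0 : N 0 = 0.
Proof. by rewrite -(scale0r (0 : X)) hm_normZ cabs0 mul0r. Qed.

Lemma hm_norm_eq0 x : N x = 0 -> x = 0.
Proof.
move/eqP; rewrite sqrtr_eq0 => ip_le0; apply/(hm_ip_eq0 HX)/(cs_norm_eq0 HA).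
by apply/eqP; rewrite eq_le ip_le0 cs_norm_ge0.
Qed.

Lemma hm_norm_distD x y z : N (x - z) <= N (x - y) + N (y - z).
Proof. exact: (@nrm_distD R X N (hm_normD HX)). Qed.

Lemma hm_norm_distC x y : N (x - y) = N (y - x).
Proof. exact: (@nrm_distC R X N hm_normN). Qed.

Lemma hm_norm_geometric_eq0 z (a s : R) : 0 <= s < 1 ->
  (forall n, N z <= a * s ^+ n) -> z = 0.
Proof.
move=> s01 z_le; apply: hm_norm_eq0; apply/eqP; rewrite eq_le hm_norm_ge0 andbT.
apply/ler_addgt0Pr => e /(geometric_eventually_lt a s01) [n /(_ n (leqnn n)) lt_e].
by rewrite add0r ltW // (le_lt_trans (z_le n)).
Qed.

Lemma hm_geometric_cauchy_cvg (u : nat -> X) (a q : R) : 0 <= a -> 0 <= q < 1 ->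
  (forall k, N (u k.+1 - u k) <= a * q ^+ k) ->
  exists l, forall k, N (u k - l) <= a / (1 - q) * q ^+ k.
Proof.
move=> a_ge0 /andP[q_ge0 q_lt1].
exact: (@geometric_cauchy_cvg R X N hm_norm0 hm_normN (hm_normD HX) (hm_complete HX)).
Qed.

Definition tprod x y z := act (ip x y) z.

Lemma tprodZ l x y z : tprod (l *: x) (l *: y) (l *: z) = (l * l^*%C * l) *: tprod x y z.
Proof. by rewrite /tprod hm_ipZl hm_ipZr scalerA (hm_actZl HX) (hm_actZr HX) scalerA. Qed.

Lemma tprodB a b c a' b' c' : tprod a b c - tprod a' b' c' =
  tprod (a - a') b c + tprod a' (b - b') c + tprod a' b' (c - c').
Proof. by rewrite /tprod hm_ipBl hm_ipBr !hm_actBl hm_actBr !addrA !subrK. Qed.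

Lemma hm_norm_tprod x y z : N (tprod x y z) <= N x * N y * N z.
Proof.
apply: le_trans (hm_norm_act HX _ _) _.
by rewrite ler_wpM2r ?hm_norm_ge0 ?(hm_cauchy_schwarz HX).
Qed.

Lemma hm_norm_tprodB a b c a' b' c' (s da db dc Bb Bc Ba' Bb' : R) :
  N (a - a') <= da * s -> N (b - b') <= db * s -> N (c - c') <= dc * s ->
  N b <= Bb -> N c <= Bc -> N a' <= Ba' -> N b' <= Bb' ->
  N (tprod a b c - tprod a' b' c')
    <= (da * Bb * Bc + Ba' * db * Bc + Ba' * Bb' * dc) * s.
Proof.
move=> ha hb hc hBb hBc hBa' hBb'; rewrite tprodB.
have le3 x y z dx dy dz : N x <= dx -> N y <= dy -> N z <= dz ->
    N (tprod x y z) <= dx * dy * dz.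
  move=> hx hy hz; apply: le_trans (hm_norm_tprod x y z) _.
  have N0 := hm_norm_ge0.
  exact: ler_pM (mulr_ge0 (N0 x) (N0 y)) (N0 z) (ler_pM (N0 x) (N0 y) hx hy) hz.
have -> : (da * Bb * Bc + Ba' * db * Bc + Ba' * Bb' * dc) * s =
    da * s * Bb * Bc + Ba' * (db * s) * Bc + Ba' * Bb' * (dc * s) by ring.
apply: le_trans (hm_normD HX _ _) _; apply: lerD; last exact: le3.
by apply: le_trans (hm_normD HX _ _) _; apply: lerD; exact: le3.
Qed.

End HilbertModule.

Section Stability.
Variables (R : realType)
  (A : lmodType R[i]) (mulA : A -> A -> A) (starA : A -> A) (nA : A -> R)
  (B : lmodType R[i]) (mulB : B -> B -> B) (starB : B -> B) (nB : B -> R)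
  (X : lmodType R[i]) (actX : A -> X -> X) (ipX : X -> X -> A)
  (Y : lmodType R[i]) (actY : B -> Y -> Y) (ipY : Y -> Y -> B).
Hypotheses (HA : is_cstar_algebra mulA starA nA) (HB : is_cstar_algebra mulB starB nB)
  (HX : is_hilbert_module mulA starA nA actX ipX)
  (HY : is_hilbert_module mulB starB nB actY ipY).
Local Notation NX := (hm_norm nA ipX).
Local Notation NY := (hm_norm nB ipY).
Local Notation TX := (tprod actX ipX).
Local Notation TY := (tprod actY ipY).

Variables (p theta : R) (f : X -> Y).
Hypotheses (p_gt3 : 3 < p) (theta_ge0 : 0 <= theta).
Hypothesis f_additive_approx : forall mu x y, cabs mu = 1 ->
  NY (f (mu *: x + y) - mu *: f x - f y) <= theta * (NX x `^ p + NX y `^ p).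
Hypothesis f_tprod_approx : forall x y z,
  NY (f (TX x y z) - TY (f x) (f y) (f z))
    <= theta * (NX x `^ p + NX y `^ p + NX z `^ p).

Let P := 2 `^ p.
Let q := 2 / P.
Let r := 2 ^+ 3 / P.
Let phi x := theta * NX x `^ p.

Lemma P_gt8 : 2 ^+ 3 < P.
Proof.
rewrite /P -powR_mulrn // /powR pnatr_eq0 /= ltr_expR ltr_pM2r ?ln_gt0 //.
by rewrite ltr1n.
Qed.

Lemma P_gt0 : 0 < P.
Proof. by apply: lt_trans P_gt8; rewrite exprn_gt0. Qed.

Lemma ratios : [/\ 0 <= q, q <= r & r < 1].
Proof.
have P0 := P_gt0; have P8 := P_gt8.
split; first by rewrite divr_ge0 ?ltW.
  by rewrite ler_pM2r ?invr_gt0 //; lra.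
by rewrite ltr_pdivrMr // mul1r.
Qed.

Lemma q01 : 0 <= q < 1.
Proof. by case: ratios => -> qr r1; rewrite (le_lt_trans qr). Qed.

Lemma phi_ge0 x : 0 <= phi x.
Proof. by rewrite mulr_ge0 ?powR_ge0. Qed.

Lemma normp_dyadic n x : NX (2 ^- n *: x) `^ p = NX x `^ p / P ^+ n.
Proof.
have dyadic_ge0 : 0 <= 2 ^- n :> R by rewrite invr_ge0 exprn_ge0.
have NX_ge0 := hm_norm_ge0 nA ipX x.
by rewrite (hm_normZ HA HX) (dyadic_cabs R n).2 powRM // powR_exprVn // mulrC.
Qed.

Lemma phi_dyadic n x : phi (2 ^- n *: x) = phi x / P ^+ n.
Proof. by rewrite /phi normp_dyadic mulrA. Qed.

Lemma dyadic_ratio n d : 2 ^+ n * (d / P ^+ n) = d * q ^+ n.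
Proof. by rewrite /q exprMn exprVn mulrCA. Qed.

Lemma dyadic_ratio3 n d : 2 ^+ (n * 3) * (d / P ^+ n) = d * r ^+ n.
Proof. by rewrite /r exprMn exprVn -exprM mulnC mulrCA. Qed.

Let hyers n x := 2 ^+ n *: f (2 ^- n *: x).

Lemma hyers0 x : hyers 0 x = f x.
Proof. by rewrite /hyers expr0 invr1 !scale1r. Qed.

Lemma hyers_step n x : NY (hyers n.+1 x - hyers n x) <= 2 * phi x / P * q ^+ n.
Proof.
set y := 2 ^- n.+1 *: x.
have -> : hyers n.+1 x - hyers n x = 2 ^+ n *: (f y + f y - f (y + y)).
  rewrite /hyers -/y; have -> : 2 ^- n *: x = y + y.
    by rewrite -scalerDl exprS invfM mulrC -splitr.
  by rewrite exprSr -scalerA scaler_nat (mulr2n (f y)) -scalerBr.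
rewrite (hm_normZ HB HY) (dyadic_cabs R n).1 (hm_norm_distC HB HY) opprD addrA.
have := f_additive_approx y y (cabs1 R); rewrite !scale1r.
move=> /(ler_wpM2l (exprn_ge0 n (ler0n R 2))).
suff -> : 2 * phi x / P * q ^+ n = 2 ^+ n * (theta * (NX y `^ p + NX y `^ p)) by [].
by rewrite mulrDr -/(phi y) /y phi_dyadic -dyadic_ratio exprSr invfM; ring.
Qed.

Let K x := 2 * phi x / P / (1 - q).

Lemma step_coef_ge0 x : 0 <= 2 * phi x / P.
Proof. exact: divr_ge0 (mulr_ge0 (ler0n R 2) (phi_ge0 x)) (ltW P_gt0). Qed.

Lemma K_ge0 x : 0 <= K x.
Proof.
have [_ q_lt1] := andP q01.
by rewrite /K divr_ge0 ?step_coef_ge0 // subr_ge0 ltW.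
Qed.

Lemma hyers_cvg x : exists l, forall k, NY (hyers k x - l) <= K x * q ^+ k.
Proof.
exact: (hm_geometric_cauchy_cvg HB HY (u := hyers^~ x) (step_coef_ge0 x) q01
  (hyers_step^~ x)).
Qed.

Let H x := sval (cid (hyers_cvg x)).

Lemma dist_hyers_H k x : NY (hyers k x - H x) <= K x * q ^+ k.
Proof. exact: (svalP (cid (hyers_cvg x))). Qed.

(* The limit even satisfies the sharper bound with [2^p - 2] for [2^p - 2^3]. *)
Lemma dist_f_H x : NY (f x - H x) <= (2 * theta) / (2 `^ p - 2 ^+ 3) * NX x `^ p.
Proof.
have := dist_hyers_H 0 x; rewrite hyers0 expr0 mulr1 => /le_trans; apply.
have P8 := P_gt8; have P0 := P_gt0.
have -> : K x = 2 * theta / (P - 2) * NX x `^ p.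
  by rewrite /K /phi /q; field; rewrite !gt_eqF //; lra.
rewrite -/P; apply: ler_wpM2r; first exact: powR_ge0.
apply: ler_wpM2l; first by rewrite mulr_ge0.
by rewrite lef_pV2 ?posrE ?subr_gt0; lra.
Qed.

Lemma H_unimodular_additive mu x y : cabs mu = 1 -> H (mu *: x + y) = mu *: H x + H y.
Proof.
move=> mu1; apply/eqP; rewrite -subr_eq0; apply/eqP.
set w := mu *: x + y.
apply: (hm_norm_geometric_eq0 HB HY (a := K w + ((phi x + phi y) + (K x + K y))) q01) => n.
apply: le_trans (hm_norm_distD HY _ (hyers n w) _) _.
rewrite mulrDl (hm_norm_distC HB HY); apply: lerD; first exact: dist_hyers_H.
apply: le_trans (hm_norm_distD HY _ (mu *: hyers n x + hyers n y) _) _.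
rewrite mulrDl; apply: lerD.
  have -> : hyers n w - (mu *: hyers n x + hyers n y) = 2 ^+ n *:
      (f (mu *: (2 ^- n *: x) + 2 ^- n *: y) - mu *: f (2 ^- n *: x) - f (2 ^- n *: y)).
    rewrite /hyers /w scalerDr !scalerBr !scalerA [2 ^- n * mu]mulrC.
    by rewrite [mu * 2 ^+ n]mulrC opprD addrA.
  rewrite (hm_normZ HB HY) (dyadic_cabs R n).1.
  apply: le_trans (ler_wpM2l (exprn_ge0 n (ler0n R 2)) (f_additive_approx _ _ mu1)) _.
  by rewrite mulrDr -!/(phi _) !phi_dyadic -mulrDl dyadic_ratio.
rewrite opprD addrACA -scalerBr; apply: le_trans (hm_normD HY _ _) _.
by rewrite (hm_normZ HB HY) mu1 mul1r mulrDl lerD ?dist_hyers_H.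
Qed.

Lemma hyers_tprod n x y z :
  hyers (n * 3) (TX x y z) - TY (hyers n x) (hyers n y) (hyers n z) = 2 ^+ (n * 3) *:
  (f (TX (2 ^- n *: x) (2 ^- n *: y) (2 ^- n *: z))
   - TY (f (2 ^- n *: x)) (f (2 ^- n *: y)) (f (2 ^- n *: z))).
Proof.
have [conjX conjXn] := dyadic_conj R n.
rewrite /hyers (tprodZ HA HX) (tprodZ HB HY) conjX conjXn -!expr2 -!exprSr.
by rewrite exprVn -!exprM scalerBr.
Qed.

Lemma norm_hyers_le n x : NY (hyers n x) <= NY (H x) + K x.
Proof.
have := hm_norm_distD HY (hyers n x) (H x) 0; rewrite !subr0 => /le_trans; apply.
rewrite addrC lerD2l; apply: le_trans (dist_hyers_H n x) _.
have [q_ge0 q_lt1] := andP q01.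
exact: ler_piMr (K_ge0 x) (exprn_ile1 _ q_ge0 (ltW q_lt1)).
Qed.

Lemma dist_hyers_H_r m n x : (n <= m)%N -> NY (hyers m x - H x) <= K x * r ^+ n.
Proof.
move=> nm; case: ratios => q_ge0 qr r_lt1.
apply: le_trans (dist_hyers_H m x) _; rewrite ler_wpM2l ?K_ge0 //.
apply: le_trans (ler_wiXn2l q_ge0 (ltW (le_lt_trans qr r_lt1)) nm) _.
by rewrite lerXn2r // nnegrE (le_trans q_ge0).
Qed.

(* Scaling all three arguments by [2^-n] scales [<x, y> z] by [2^-3n], so the
   defect of [f] is amplified by [2^3n] only and still decays like [r^n]. *)
Lemma H_tprod x y z : H (TX x y z) = TY (H x) (H y) (H z).
Proof.
apply/eqP; rewrite -subr_eq0; apply/eqP.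
set w := TX x y z.
pose bnd v := NY (H v) + K v.
pose D := K x * bnd y * bnd z + NY (H x) * K y * bnd z + NY (H x) * NY (H y) * K z.
have [_ _ r_lt1] := ratios.
have r01 : 0 <= r < 1 by rewrite r_lt1 divr_ge0 ?exprn_ge0 ?ltW ?P_gt0.
apply: (hm_norm_geometric_eq0 HB HY (a := K w + ((phi x + phi y + phi z) + D)) r01) => n.
apply: le_trans (hm_norm_distD HY _ (hyers (n * 3) w) _) _.
rewrite mulrDl (hm_norm_distC HB HY); apply: lerD; first by rewrite dist_hyers_H_r ?leq_pmulr.
apply: le_trans (hm_norm_distD HY _ (TY (hyers n x) (hyers n y) (hyers n z)) _) _.
rewrite mulrDl; apply: lerD.
  rewrite hyers_tprod (hm_normZ HB HY) (dyadic_cabs R _).1.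
  apply: le_trans (ler_wpM2l (exprn_ge0 _ (ler0n R 2)) (f_tprod_approx _ _ _)) _.
  by rewrite !mulrDr -!/(phi _) !phi_dyadic !dyadic_ratio3 !mulrDl.
exact: (hm_norm_tprodB HB HY (dist_hyers_H_r x (leqnn n)) (dist_hyers_H_r y (leqnn n))
  (dist_hyers_H_r z (leqnn n)) (norm_hyers_le n y) (norm_hyers_le n z)
  (lexx (NY (H x))) (lexx (NY (H y)))).
Qed.

Lemma H_star_hom : hilbert_star_hom starA starB actX ipX actY ipY H.
Proof.
split; first split.
- exact: unimodular_additive_linear H_unimodular_additive.
- exact: H_tprod.
by move=> x y z; rewrite (hm_ip_star HX) (hm_ip_star HY); exact: H_tprod.
Qed.

Lemma exists_approx_star_hom : exists H : X -> Y,
  hilbert_star_hom starA starB actX ipX actY ipY H /\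
  forall x, NY (f x - H x) <= (2 * theta) / (2 `^ p - 2 ^+ 3) * NX x `^ p.
Proof. by exists H; split; [exact: H_star_hom | exact: dist_f_H]. Qed.

Lemma approx_linear_unique (G G' : X -> Y) (C : R) :
  (forall l x y, G (l *: x + y) = l *: G x + G y) ->
  (forall l x y, G' (l *: x + y) = l *: G' x + G' y) ->
  (forall x, NY (f x - G x) <= C * NX x `^ p) ->
  (forall x, NY (f x - G' x) <= C * NX x `^ p) -> G = G'.
Proof.
move=> G_lin G'_lin fG fG'; apply: funext => x; apply/eqP; rewrite -subr_eq0; apply/eqP.
apply: (hm_norm_geometric_eq0 HB HY (a := (C + C) * NX x `^ p) q01) => n.
have -> : G x - G' x = 2 ^+ n *: (G (2 ^- n *: x) - G' (2 ^- n *: x)).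
  rewrite scalerBr -(lincomb_scale G_lin) -(lincomb_scale G'_lin) !scalerA.
  by rewrite mulfV ?scale1r // expf_neq0 // pnatr_eq0.
rewrite (hm_normZ HB HY) (dyadic_cabs R n).1.
have := hm_norm_distD HY (G (2 ^- n *: x)) (f (2 ^- n *: x)) (G' (2 ^- n *: x)).
rewrite (hm_norm_distC HB HY (G _) (f _)) => /le_trans /(_ (lerD (fG _) (fG' _))).
move/(ler_wpM2l (exprn_ge0 n (ler0n R 2))) => /le_trans; apply.
by rewrite -mulrDl normp_dyadic [(C + C) * (_ / _)]mulrA dyadic_ratio.
Qed.

End Stability.

Theorem corollary3p4 (R : realType)
  (A : lmodType R[i]) (mulA : A -> A -> A) (starA : A -> A) (nA : A -> R)
  (B : lmodType R[i]) (mulB : B -> B -> B) (starB : B -> B) (nB : B -> R)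
  (X : lmodType R[i]) (actX : A -> X -> X) (ipX : X -> X -> A)
  (Y : lmodType R[i]) (actY : B -> Y -> Y) (ipY : Y -> Y -> B)
  (HA : is_cstar_algebra mulA starA nA)
  (HB : is_cstar_algebra mulB starB nB)
  (HX : is_hilbert_module mulA starA nA actX ipX)
  (HY : is_hilbert_module mulB starB nB actY ipY)
  (p theta : R) (f : X -> Y) :
  3 < p -> 0 <= theta ->
  (forall (mu : R[i]) (x y : X), cabs mu = 1 ->
     hm_norm nB ipY (f (mu *: x + y) - mu *: f x - f y)
       <= theta * (hm_norm nA ipX x `^ p + hm_norm nA ipX y `^ p)) ->
  (forall x y z : X,
     hm_norm nB ipY (f (actX (ipX x y) z) - actY (ipY (f x) (f y)) (f z))
       <= theta * (hm_norm nA ipX x `^ p + hm_norm nA ipX y `^ p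
                   + hm_norm nA ipX z `^ p)) ->
  (forall x y z : X,
     hm_norm nB ipY (f (actX (starA (ipX x y)) z)
                     - actY (starB (ipY (f x) (f y))) (f z))
       <= theta * (hm_norm nA ipX x `^ p + hm_norm nA ipX y `^ p
                   + hm_norm nA ipX z `^ p)) ->
  exists! H : X -> Y,
    hilbert_star_hom starA starB actX ipX actY ipY H /\
    (forall x : X,
       hm_norm nB ipY (f x - H x)
         <= (2 * theta) / (2 `^ p - 2 ^+ 3) * hm_norm nA ipX x `^ p).
Proof.
move=> p_gt3 theta_ge0 f_add f_tprod _.
have [H [H_hom f_H]] := exists_approx_star_hom HA HB HX HY p_gt3 theta_ge0 f_add f_tprod.
exists H; split => // G [[[G_lin _] _] f_G].
case: H_hom => [[H_lin _] _].
exact: (approx_linear_unique HA HB HX HY p_gt3 H_lin G_lin f_H f_G).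
Qed.
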